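(* Let $d\in\mathbb{N}$, let $\mathcal{L}:\mathbb{R}^d\to\mathbb{R}$ be differentiable and $L$-smooth (i.e. $\nabla\mathcal{L}$ is $L$-Lipschitz with respect to the Euclidean norm, for some $L\ge 0$), and let $\tau>0$. Let $(\lambda^{(k)})_{k\ge 0}$ be any sequence of parameters with $\lambda^{(k)}\ge 0$. Starting from arbitrary $p^{(0)},\theta^{(0)}\in\mathbb{R}^d$, define for $k\ge 0$ $$p^{(k+1)} = p^{(k)} - \tau\,\nabla\mathcal{L}(\theta^{(k)}),\qquad \theta^{(k+1)} = \nabla \operatorname{EN}_{\lambda^{(k)}}^*\big(p^{(k+1)}\big),$$ where $\operatorname{EN}_\lambda(\theta)=\tfrac12|\theta|_2^2+\lambda|\theta|_1$ and $\nabla\operatorname{EN}_\lambda^*(p) = \big(\operatorname{sign}(p_i)\max\{|p_i|-\lambda,0\}\big)_{i=1}^d$ is the gradient of its convex conjugate (componentwise soft-thresholding). Then for every $k\ge 1$, $$\mathcal{L}(\theta^{(k+1)}) + \Big(\frac{1}{\tau}-\frac{L}{2}\Big)\,|\theta^{(k+1)}-\theta^{(k)}|_2^2 + \frac{\lambda^{(k)}-\lambda^{(k-1)}}{\tau}\big(|\theta^{(k+1)}|_1 - |\theta^{(k)}|_1\big) \le \mathcal{L}(\theta^{(k)}).$$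
   Context: $|\cdot|_1$ and $|\cdot|_2$ denote the $\ell_1$ and Euclidean norms on $\mathbb{R}^d$. The iteration is a linearized Bregman / lazy mirror descent scheme with an elastic-net mirror functional whose $\ell_1$-weight $\lambda^{(k)}$ may change from iteration to iteration. *)

From HB Require Import structures.
From mathcomp Require Import all_boot all_order all_algebra.
From mathcomp Require Import all_classical all_reals all_analysis.
Set Implicit Arguments. Unset Strict Implicit. Unset Printing Implicit Defensive.
Import Order.TTheory GRing.Theory Num.Theory.
Import numFieldNormedType.Exports.
Local Open Scope ring_scope.

Definition sqnorm2 {R : realType} {d : nat} (x : 'rV[R]_d) : R :=
  \sum_(i < d) x 0 i ^+ 2.

Definition norm2 {R : realType} {d : nat} (x : 'rV[R]_d) : R :=
  Num.sqrt (sqnorm2 x).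

Definition norm1 {R : realType} {d : nat} (x : 'rV[R]_d) : R :=
  \sum_(i < d) `|x 0 i|.

Definition grad {R : realType} {d : nat} (f : 'rV[R]_d -> R) (x : 'rV[R]_d)
  : 'rV[R]_d := \row_(i < d) ('D_(delta_mx 0 i) f x).

(* gradient of the conjugate of EN_lambda: componentwise soft-thresholding *)
Definition soft_thresh {R : realType} {d : nat} (lam : R) (p : 'rV[R]_d)
  : 'rV[R]_d := \row_(i < d) (Num.sg (p 0 i) * Num.max (`|p 0 i| - lam) 0).

Definition L_smooth {R : realType} {d : nat} (f : 'rV[R]_d -> R) (L : R) :=
  forall x y : 'rV[R]_d, norm2 (grad f x - grad f y) <= L * norm2 (x - y).

Fixpoint lbi_iter {R : realType} {d : nat} (f : 'rV[R]_d -> R) (tau : R)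
  (lam : nat -> R) (p0 th0 : 'rV[R]_d) (k : nat) : 'rV[R]_d * 'rV[R]_d :=
  match k with
  | 0%N => (p0, th0)
  | k'.+1 =>
      let pt := lbi_iter f tau lam p0 th0 k' in
      let p' := pt.1 - tau *: grad f pt.2 in
      (p', soft_thresh (lam k') p')
  end.

(* The elastic-net mirror step is a proximal step: coordinatewise,
   p^(k+1) - theta^(k+1) is lambda^(k) times a subgradient of |.| at theta^(k+1).
   Writing this for two consecutive steps and subtracting, the dual updates cancel
   up to the gradient step, which gives
   (lambda^(k) - lambda^(k-1)) (|theta^(k+1)|_1 - |theta^(k)|_1)
     <= -tau <grad f(theta^(k)), theta^(k+1) - theta^(k)> - |theta^(k+1) - theta^(k)|_2^2.
   Dividing by tau and adding the descent lemma
   f(y) <= f(x) + <grad f(x), y - x> + L/2 |y - x|_2^2 for L-smooth f yields the claim. *)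
From HB Require Import structures.
From mathcomp Require Import all_boot all_order all_algebra.
From mathcomp Require Import all_classical all_reals all_analysis.
From mathcomp Require Import ring lra.
Import Order.TTheory GRing.Theory Num.Theory.
Import numFieldNormedType.Exports.
Local Open Scope ring_scope.

Section EuclideanGeometry.
Context {R : realType} {d : nat}.
Implicit Types (u v : 'rV[R]_d) (t : R).

Definition vdot u v : R := \sum_(i < d) u 0 i * v 0 i.

Lemma vdotC u v : vdot u v = vdot v u.
Proof. by apply: eq_bigr => i _; rewrite mulrC. Qed.

Lemma vdot0l v : vdot 0 v = 0.
Proof. by rewrite /vdot big1 // => i _; rewrite mxE mul0r. Qed.

Lemma vdotBl u v w : vdot (u - v) w = vdot u w - vdot v w.
Proof. by rewrite /vdot -sumrB; apply: eq_bigr => i _; rewrite !mxE mulrBl. Qed.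

Lemma vdotZl t u v : vdot (t *: u) v = t * vdot u v.
Proof. by rewrite /vdot mulr_sumr; apply: eq_bigr => i _; rewrite mxE mulrA. Qed.

Lemma sqnorm2_ge0 u : 0 <= sqnorm2 u.
Proof. by apply: sumr_ge0 => i _; rewrite sqr_ge0. Qed.

Lemma sqnorm2_eq0 u : (sqnorm2 u == 0) = (u == 0).
Proof.
rewrite psumr_eq0 => [|i _]; last exact: sqr_ge0.
apply/idP/eqP => [/allP u0 | ->]; last by apply/allP => i _ /=; rewrite mxE expr0n.
apply/rowP => i; rewrite mxE; apply/eqP.
by rewrite -sqrf_eq0; exact: u0 (mem_index_enum i).
Qed.

Lemma norm2_ge0 u : 0 <= norm2 u.
Proof. exact: sqrtr_ge0. Qed.

Lemma norm2_sqr u : norm2 u ^+ 2 = sqnorm2 u.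
Proof. by rewrite sqr_sqrtr // sqnorm2_ge0. Qed.

Lemma norm2Z t u : norm2 (t *: u) = `|t| * norm2 u.
Proof.
rewrite /norm2 -sqrtr_sqr -sqrtrM ?sqr_ge0 // mulr_sumr.
by congr Num.sqrt; apply: eq_bigr => i _; rewrite mxE exprMn.
Qed.

Lemma vdot_le_norm2 u v : vdot u v <= norm2 u * norm2 v.
Proof.
wlog [u0 v0] : u v / u != 0 /\ v != 0.
  move=> wlog_uv; have [-> | u0] := eqVneq u 0.
    by rewrite vdot0l mulr_ge0 ?norm2_ge0.
  have [-> | v0] := eqVneq v 0; last exact: wlog_uv.
  by rewrite vdotC vdot0l mulr_ge0 ?norm2_ge0.
set a := norm2 u; set b := norm2 v.
have ab_gt0 : 0 < a * b.
  by rewrite mulr_gt0 // lt0r norm2_ge0 andbT sqrtr_eq0 -ltNge lt0r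
    sqnorm2_ge0 sqnorm2_eq0 ?u0 ?v0.
have sos : 0 <= b ^+ 2 * sqnorm2 u - 2 * a * b * vdot u v + a ^+ 2 * sqnorm2 v.
  have -> : b ^+ 2 * sqnorm2 u - 2 * a * b * vdot u v + a ^+ 2 * sqnorm2 v
      = \sum_(i < d) (b * u 0 i - a * v 0 i) ^+ 2.
    rewrite /sqnorm2 /vdot !mulr_sumr -sumrN -!big_split /=.
    by apply: eq_bigr => i _; ring.
  by apply: sumr_ge0 => i _; rewrite sqr_ge0.
rewrite -!norm2_sqr -/a -/b in sos.
have : 0 <= (a * b) * (a * b - vdot u v) by nra.
by rewrite pmulr_rge0 // subr_ge0.
Qed.

End EuclideanGeometry.

Section SmoothDescent.
Context {R : realType} {d : nat} {f : 'rV[R]_d -> R}.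
Hypothesis f_diff : forall x : 'rV[R]_d, differentiable f x.
Implicit Types (x h : 'rV[R]_d) (t : R).

Lemma derive_grad x h : 'D_h f x = vdot (grad f x) h.
Proof.
rewrite deriveE // {1}(row_sum_delta h) linear_sum /vdot.
by apply: eq_bigr => i _; rewrite linearZ /= -deriveE // mxE mulrC.
Qed.

Lemma is_derive_line x h t :
  is_derive t (1 : R) (fun s : R => f (x + s *: h)) ('D_h f (x + t *: h)).
Proof.
set g := fun s : R => f (x + s *: h).
have quotient_eq : (fun s : R => s^-1 *: ((g \o shift t) (s *: 1) - g t)) =
    (fun s => s^-1 *: ((f \o shift (x + t *: h)) (s *: h) - f (x + t *: h))).
  apply: funext => s; rewrite /g /= /shift; congr (_ *: (f _ - _)).
  by rewrite scalerDl [s%:A]mulr1 addrCA.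
split; first by rewrite /derivable quotient_eq; exact: diff_derivable.
by rewrite /derive quotient_eq.
Qed.

Context {L : R}.
Hypothesis f_smooth : L_smooth f L.

Lemma derive_line_le x h t : 0 <= t ->
  'D_h f (x + t *: h) <= vdot (grad f x) h + L * t * sqnorm2 h.
Proof.
move=> t_ge0; rewrite derive_grad -lerBlDl -vdotBl.
apply: (le_trans (vdot_le_norm2 _ _)).
rewrite -norm2_sqr expr2 mulrA ler_wpM2r ?norm2_ge0 //.
apply: (le_trans (f_smooth _ x)).
by rewrite addrAC subrr add0r norm2Z ger0_norm // mulrA.
Qed.

Lemma descent_lemma x h :
  f (x + h) <= f x + vdot (grad f x) h + L / 2 * sqnorm2 h.
Proof.
set c := vdot (grad f x) h; set k := L / 2 * sqnorm2 h.
pose phi := (fun s : R => f (x + s *: h)) - c \*: id - k \*: (id * id).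
have phi_derive t : is_derive t (1 : R) phi
    ('D_h f (x + t *: h) - c *: (1 : R) - k *: (t *: (1 : R) + t *: (1 : R))).
  have id_derive : is_derive t (1 : R) id 1 := is_derive_id _ _.
  exact: is_deriveB (is_deriveB (is_derive_line x h t) (is_deriveZ c id_derive))
    (is_deriveZ k (is_deriveM id_derive id_derive)).
have : phi 1 <= phi 0.
  apply: (@ler0_derive1_le_cc _ phi 0 1); rewrite ?bound_itvE ?ler01 //.
  - move=> t; rewrite in_itv /= => /andP[t_gt0 _].
    rewrite derive1E derive_val /GRing.scale /= !mulr1.
    have := derive_line_le x h t (ltW t_gt0); rewrite -/c /k; lra.
  - by apply: derivable_within_continuous => t _; exact: ex_derive.
have phiE t : phi t = f (x + t *: h) - c * t - k * (t * t) by [].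
by rewrite !phiE scale0r scale1r addr0 !mulr0 !mulr1 !subr0; lra.
Qed.

End SmoothDescent.

Section SoftThresholding.
Context {R : realDomainType}.
Implicit Types (lam mu p q c : R).

Definition shrink lam q : R := Num.sg q * Num.max (`|q| - lam) 0.

(* [q - shrink lam q] is [lam] times a subgradient of [|.|] at [shrink lam q]. *)
Lemma shrink_subgrad lam q c : 0 <= lam ->
  lam * (`|shrink lam q| - `|c|) <= (q - shrink lam q) * (shrink lam q - c).
Proof.
move=> lam_ge0; rewrite /shrink.
have := ler_norm (- c); rewrite normrN => Nc_le; have c_le := ler_norm c.
rewrite maxElt; case: (ltrgtP q 0) => [q_lt0 | q_gt0 | ->].
- rewrite (ltr0_sg q_lt0) (ltr0_norm q_lt0); case: ifPn => [q_small | ].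
  + by rewrite mulr0 normr0; nra.
  + by rewrite -leNgt => q_large; rewrite ler0_norm; nra.
- rewrite (gtr0_sg q_gt0) (gtr0_norm q_gt0); case: ifPn => [q_small | ].
  + by rewrite mulr0 normr0; nra.
  + by rewrite -leNgt => q_large; rewrite ger0_norm; nra.
- by rewrite sgr0 !mul0r normr0; nra.
Qed.

Lemma shrink_step lam mu p q : 0 <= lam -> 0 <= mu ->
  (mu - lam) * (`|shrink mu q| - `|shrink lam p|)
    <= (q - p) * (shrink mu q - shrink lam p) - (shrink mu q - shrink lam p) ^+ 2.
Proof.
move=> lam_ge0 mu_ge0.
have := shrink_subgrad mu q (shrink lam p) mu_ge0.
have := shrink_subgrad lam p (shrink mu q) lam_ge0.
set a := shrink mu q; set b := shrink lam p; nra.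
Qed.

End SoftThresholding.

Lemma soft_thresh_step {R : realType} {d : nat} (lam mu : R) (p q : 'rV[R]_d) :
  0 <= lam -> 0 <= mu ->
  (mu - lam) * (norm1 (soft_thresh mu q) - norm1 (soft_thresh lam p))
    <= vdot (q - p) (soft_thresh mu q - soft_thresh lam p)
       - sqnorm2 (soft_thresh mu q - soft_thresh lam p).
Proof.
move=> lam_ge0 mu_ge0.
rewrite /norm1 /vdot /sqnorm2 -sumrB mulr_sumr -sumrB; apply: ler_sum => i _.
by rewrite !mxE; exact: shrink_step.
Qed.

Theorem lemma1 (R : realType) (d : nat) (f : 'rV[R]_d -> R) (L tau : R)
  (lam : nat -> R) (p0 th0 : 'rV[R]_d) :
  (forall x : 'rV[R]_d, differentiable f x) ->
  0 <= L -> L_smooth f L -> 0 < tau ->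
  (forall k, 0 <= lam k) ->
  forall k : nat, (1 <= k)%N ->
    let th := fun n => (lbi_iter f tau lam p0 th0 n).2 in
    f (th k.+1) + (tau^-1 - L / 2) * sqnorm2 (th k.+1 - th k)
      + (lam k - lam k.-1) / tau * (norm1 (th k.+1) - norm1 (th k))
    <= f (th k).
Proof.
move=> f_diff _ f_smooth tau_gt0 lam_ge0 [//|k] _; cbv zeta beta; rewrite [k.+1.-1]/=.
set p := (lbi_iter f tau lam p0 th0 k.+1).1.
set b := (lbi_iter f tau lam p0 th0 k.+1).2.
set a := (lbi_iter f tau lam p0 th0 k.+2).2.
have a_def : a = soft_thresh (lam k.+1) (p - tau *: grad f b) by [].
have b_def : b = soft_thresh (lam k) p by [].
have := soft_thresh_step _ _ p (p - tau *: grad f b) (lam_ge0 k) (lam_ge0 k.+1).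
rewrite -a_def -b_def addrAC subrr add0r -scaleNr vdotZl.
have := descent_lemma f_diff f_smooth b (a - b); rewrite addrC subrK.
set I := vdot _ _; set S := sqnorm2 _; set N := norm1 a - norm1 b.
move=> descent step.
have : (lam k.+1 - lam k) * N / tau <= - I - S / tau.
  by rewrite ler_pdivrMr //; have := divfK (lt0r_neq0 tau_gt0) S; nra.
by rewrite mulrAC; lra.
Qed.
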